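(* Let $T$ be an $X$-tree and suppose $x_1,\dots,x_6$ are six distinct elements of $X$ such that $x_1x_4$, $x_2x_5$, $x_3x_6$ are all $T$-cherries. Then $\mathcal{L}_1=\{x_1x_2,x_2x_3,x_3x_4,x_4x_5,x_5x_6,x_6x_1\}$ and $\mathcal{L}_2=\{x_1x_3,x_3x_4,x_4x_6,x_6x_1\}$ are circuits of $\mathbb{M}(T)$ while their symmetric difference $\{x_1x_2,x_2x_3,x_3x_1,x_4x_5,x_5x_6,x_6x_4\}$ is independent in $\mathbb{M}(T)$; consequently $\mathbb{M}(T)$ is not a binary matroid. In particular, if $T$ is a binary $X$-tree such that $\mathbb{M}(T)$ is a binary matroid, then $T$ is a caterpillar tree.
   Context: Let $X$ be a finite set with $|X|=n\ge 3$. An $X$-tree is a finite tree $T=(V,E)$ whose set of degree-1 vertices is exactly $X$ and which has no vertices of degree $2$; it is binary if all interior vertices have degree $3$, and a binary $X$-tree is a caterpillar tree if all its interior vertices lie on a single path of $T$. A cord is a $2$-subset $xy$ of $X$. For each cord $xy$, $\lambda^T_{xy}:\mathbb{R}^E\to\mathbb{R}$, $\omega\mapsto\sum_{e\in E(x|y)}\omega(e)$ where $E(x|y)$ is the edge set of the path from $x$ to $y$. $\mathbb{M}(T)$ is the matroid on $\binom{X}{2}$ represented over $\mathbb{R}$ by $xy\mapsto\lambda^T_{xy}$; circuits are minimal dependent sets. A binary matroid is one representable over the field with two elements. For $x\in X$, $e_x$ is the edge containing $x$; a cord $ab$ is a $T$-cherry if $e_a$ and $e_b$ share a vertex. *)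

From HB Require Import structures.
From mathcomp Require Import all_boot all_order all_algebra.
Set Implicit Arguments. Unset Strict Implicit. Unset Printing Implicit Defensive.
Import Order.TTheory GRing.Theory Num.Theory.
Local Open Scope ring_scope.

Section Trees.
Variables (V : finType) (adj : rel V).

Definition deg (v : V) : nat := #|[set u | adj v u]|.

Definition edges : {set {set V}} :=
  [set A : {set V} | [exists u, exists v, adj u v && (A == [set u; v])]].

(* X = the set of degree-1 vertices (leaves) *)
Definition leaves : {set V} := [set v | deg v == 1%N].

Definition is_tree : Prop :=
  symmetric adj /\ irreflexive adj /\ (forall u v, connect adj u v) /\
  (forall c : seq V, uniq c -> (3 <= size c)%N -> ~~ cycle adj c).

Definition is_Xtree : Prop :=
  is_tree /\ (forall v, deg v != 2%N) /\ (3 <= #|leaves|)%N.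

Definition is_binary_Xtree : Prop :=
  is_Xtree /\ (forall v, v \notin leaves -> deg v = 3%N).

Definition is_caterpillar : Prop :=
  is_binary_Xtree /\
  exists (x : V) (p : seq V), path adj x p /\ uniq (x :: p) /\
    (forall v, v \notin leaves -> v \in x :: p).

Definition simple_walk (x y : V) (p : seq V) : bool :=
  [&& path adj x p, last x p == y & uniq (x :: p)].

Definition walk_edges (x : V) (p : seq V) : seq {set V} :=
  [seq [set uv.1; uv.2] | uv <- zip (x :: p) p].

(* e lies in E(x|y), the edge set of the path from x to y
   (a simple walk has fewer than #|V| steps, so the bound is harmless) *)
Definition on_path (x y : V) (e : {set V}) : bool :=
  [exists k : 'I_#|V|, exists t : k.-tuple V,
     simple_walk x y t && (e \in walk_edges x t)].

Definition cord_path (c : {set V}) (e : {set V}) : bool :=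
  [exists x in c, exists y in c, (x != y) && on_path x y e].

Definition cords : {set {set V}} :=
  [set c : {set V} | (c \subset leaves) && (#|c| == 2%N)].

(* T-cherry ab: e_a and e_b share a vertex *)
Definition cherry (a b : V) : bool :=
  [&& a \in leaves, b \in leaves, a != b &
   [exists u, exists v, [&& adj a u, adj b v &
      ([set a; u] :&: [set b; v] != set0)]]].

Variable R : realFieldType.

Definition lambda (c : {set V}) (w : {set V} -> R) : R :=
  \sum_(e in edges | cord_path c e) w e.

Definition indep (S : {set {set V}}) : Prop :=
  S \subset cords /\
  forall a : {set V} -> R,
    (forall w : {set V} -> R, \sum_(c in S) a c * lambda c w = 0) ->
    forall c, c \in S -> a c = 0.

Definition circuit (S : {set {set V}}) : Prop :=
  S \subset cords /\ ~ indep S /\ (forall S' : {set {set V}}, S' \proper S -> indep S').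

Definition binary_matroid : Prop :=
  exists (m : nat) (phi : {set V} -> 'rV['F_2]_m),
    forall S : {set {set V}}, S \subset cords ->
      (indep S <->
       forall a : {set V} -> 'F_2,
         \sum_(c in S) a c *: phi c = 0 -> forall c, c \in S -> a c = 0).

End Trees.

(* For leaves x, y hanging from interior vertices px, py ("x is pendant at px")
   every x--y path consists of the two pendant edges and the px--py path, so
       lambda_xy(w) = w(x px) + w(y py) + lambda_{px py}(w)     (lambda_pendant).
   With parents x1,x4 |-> a, x2,x5 |-> b, x3,x6 |-> c the parent paths cancel in
   the alternating sums over the hexagon L1 and the square L2, so both are
   dependent.  Conversely, testing a relation on the indicator of the pendant
   edge of x_i shows that the coefficients of the cords at x_i sum to zero
   (star_relation): around the even cycles L1, L2 one zero coefficient forces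
   all to vanish (so they are circuits), and around the two triangles forming
   the symmetric difference everything vanishes (so it is independent).  Over
   GF(2) the vectors of a circuit sum to zero, so the symmetric difference of
   two circuits is dependent in any binary representation: M(T) is not binary.
   For the caterpillar statement, the interior vertices of a tree either lie on
   one path or contain three inner ends (interior vertices with at most one
   interior neighbour); in a binary tree each inner end carries a cherry, and
   three cherries contradict binarity by the first part. *)

From mathcomp Require Import all_boot all_order all_algebra.
From mathcomp Require Import ring lra zify.
From Stdlib Require Import Classical.
Set Implicit Arguments. Unset Strict Implicit. Unset Printing Implicit Defensive.
Import Order.TTheory GRing.Theory Num.Theory.

Lemma mem_zip_both (S T : eqType) (s : seq S) (t : seq T) a b :
  (a, b) \in zip s t -> (a \in s) && (b \in t).
Proof.
elim: s t => [|x s IH] [|y t] //=.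
rewrite in_cons => /orP[/eqP[-> ->]|/IH /andP[ins bt]]; rewrite !in_cons ?eqxx //.
by rewrite ins bt !orbT.
Qed.

Lemma set2_eq (T : finType) (a b c d : T) :
  ([set a; b] == [set c; d]) = ((a == c) && (b == d)) || ((a == d) && (b == c)).
Proof.
apply/eqP/idP => [E|/orP[]/andP[/eqP-> /eqP->] //]; last by rewrite setUC.
have Ha : a \in [set c; d] by rewrite -E !inE eqxx.
have Hb : b \in [set c; d] by rewrite -E !inE eqxx orbT.
have Hc : c \in [set a; b] by rewrite E !inE eqxx.
have Hd : d \in [set a; b] by rewrite E !inE eqxx orbT.
move: Ha Hb Hc Hd; rewrite !inE.
by move=> /orP[]/eqP Ea /orP[]/eqP Eb /orP[]/eqP Ec /orP[]/eqP Ed; subst; rewrite ?eqxx ?orbT.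
Qed.

Section SymmetricGraphs.
Variables (V : finType) (adj : rel V).

Lemma leaf_nb_unique l u v : l \in leaves adj -> adj l u -> adj l v -> u = v.
Proof.
rewrite inE /deg => /eqP deg1 lu lv; apply/eqP; apply: contraT => uv.
have : #|[set u; v]| <= #|[set w | adj l w]|.
  by apply/subset_leq_card/subsetP => z; rewrite !inE => /orP[]/eqP->.
by rewrite cards2 uv deg1.
Qed.

Lemma walk_edge_end (x u v : V) (t : seq V) : [set u; v] \in walk_edges x t -> u \in x :: t.
Proof.
case/mapP => [[p q]] /mem_zip_both /andP[pxt qt] /= E.
have : u \in [set p; q] by rewrite -E !inE eqxx.
by case/setU1P => [->|/set1P->] //; rewrite in_cons qt orbT.
Qed.

Hypothesis adj_sym : symmetric adj.

(* Every vertex of a simple walk other than its last one is not a leaf: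
   it has a predecessor and a successor on the walk, which are distinct. *)
Lemma walk_inner_not_leaf x y t z :
  simple_walk adj x y t -> z \in t -> z != y -> z \notin leaves adj.
Proof.
case/and3P => wp /eqP wl wu zt zy.
case/splitPr: zt wp wl wu => t1 t2.
rewrite cat_path /= last_cat /= => /andP[_ /andP[pz wp2]].
case: t2 wp2 => [|h t2] /=; first by move=> _ Ez; rewrite Ez eqxx in zy.
case/andP=> zh _ _ wu; apply/negP => zleaf.
have Eh := leaf_nb_unique zleaf zh (etrans (adj_sym _ _) pz).
move: wu; rewrite -cons_uniq -cat_cons cat_uniq => /and3P[_ /hasPn /(_ h)].
by rewrite !in_cons eqxx orbT -in_cons Eh mem_last => /(_ isT).
Qed.

Lemma leaf_edge_off_path l q y z :
  l \in leaves adj -> l != y -> l != z -> on_path adj y z [set l; q] = false.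
Proof.
move=> lleaf ly lz; apply/negbTE/existsP => [[k /existsP[t /andP[w /walk_edge_end]]]].
rewrite in_cons (negbTE ly) /= => lt.
by have := walk_inner_not_leaf w lt lz; rewrite lleaf.
Qed.

End SymmetricGraphs.

Section Trees.
Variables (V : finType) (adj : rel V).
Hypothesis tree : is_tree adj.
Let adj_sym : symmetric adj := proj1 tree.

(* Connectivity gives walks, and shortening them gives simple walks. *)
Lemma simple_walk_exists x y : exists t, simple_walk adj x y t.
Proof.
case: tree => _ [_ [conn _]]; case/connectP: (conn x y) => p wp ->.
by case: (shortenP wp) => p' wp' up' _; exists p'; rewrite /simple_walk wp' up' eqxx.
Qed.

(* on_path bounds the length of the walk by #|V|; simple walks satisfy it. *)
Lemma on_pathP x y e :
  reflect (exists t, simple_walk adj x y t && (e \in walk_edges x t)) (on_path adj x y e).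
Proof.
apply: (iffP existsP) => [[k /existsP[t H]]|[t /andP[w et]]]; first by exists t.
have st : size t < #|V|.
  case/and3P: w => _ _ /card_uniqP ct; by have := max_card (mem (x :: t)); rewrite ct.
by exists (Ordinal st); apply/existsP; exists (in_tuple t); rewrite w et.
Qed.

Lemma on_path_refl p e : on_path adj p p e = false.
Proof.
apply/negbTE/on_pathP => [[[|h t] /andP[/and3P[_ /eqP pl pu] //]]].
by move: pu; rewrite -pl /= mem_last.
Qed.

Definition pendant (x p : V) : bool :=
  [&& x \in leaves adj, adj x p & p \notin leaves adj].

Lemma pendant_neq x p y q : pendant x p -> pendant y q -> x != q.
Proof.
case/and3P=> xl _ _ /and3P[_ _ qi]; by apply: contraNneq qi => <-.
Qed.

Lemma on_path_head x p y e : pendant x p -> y != x ->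
  on_path adj x y e = (e == [set x; p]) || on_path adj p y e.
Proof.
case/and3P=> xl xp pi yx; apply/idP/idP.
  case/on_pathP => [[|h t]] /andP[/and3P[wp /eqP yl xu] xe].
    by rewrite -yl eqxx in yx.
  case/andP: wp => xh wp.
  rewrite (leaf_nb_unique xl xh xp) in wp yl xu xe.
  move: xe; rewrite /walk_edges /= in_cons => /orP[->//|pe].
  apply/orP; right; apply/on_pathP; exists t; rewrite pe andbT.
  by apply/and3P; split => //; [apply/eqP | case/andP: xu].
have walk_from_p t : simple_walk adj p y t -> simple_walk adj x y (p :: t).
  move=> w; case/and3P: (w) => wp yl pu; apply/and3P; split; [by rewrite /= xp | by [] | ].
  rewrite cons_uniq pu andbT in_cons negb_or; apply/andP; split.
    by apply: contraNneq pi => <-.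
  by apply: contraL xl => xt; rewrite (walk_inner_not_leaf adj_sym w xt) // eq_sym.
case/orP => [/eqP->|/on_pathP[t /andP[w pe]]].
  have [t w] := simple_walk_exists p y.
  by apply/on_pathP; exists (p :: t); rewrite walk_from_p //= /walk_edges /= mem_head.
apply/on_pathP; exists (p :: t); rewrite walk_from_p //=.
by rewrite /walk_edges /= in_cons pe orbT.
Qed.

Lemma walk_edges_rcons (a y : V) t :
  walk_edges a (rcons t y) = rcons (walk_edges a t) [set last a t; y].
Proof. by elim: t a => [|b t IH] a //=; rewrite /walk_edges /= -/(walk_edges b _) IH. Qed.

Lemma on_path_tail a y q e : pendant y q -> a != y ->
  on_path adj a y e = (e == [set y; q]) || on_path adj a q e.
Proof.
case/and3P=> yl yq qi ay; apply/idP/idP.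
  case/on_pathP => t; case/lastP: t => [|t z] /andP[/and3P[wp /eqP yl' au] ae].
    by rewrite -yl' eqxx in ay.
  rewrite last_rcons in yl'; subst z.
  move: wp; rewrite rcons_path => /andP[wp ly].
  have lq : last a t = q by apply: (leaf_nb_unique yl); rewrite // adj_sym.
  move: ae; rewrite walk_edges_rcons mem_rcons in_cons lq [[set q; y]]setUC.
  case/orP => [->//|ae]; apply/orP; right; apply/on_pathP; exists t; rewrite ae andbT.
  apply/and3P; split; rewrite ?lq //.
  by move: au; rewrite -rcons_cons rcons_uniq => /andP[].
have walk_to_y t : simple_walk adj a q t -> simple_walk adj a y (rcons t y).
  move=> w; case/and3P: (w) => wp /eqP lq au; apply/and3P; split.
  - by rewrite rcons_path wp lq adj_sym.
  - by rewrite last_rcons.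
  rewrite -rcons_cons rcons_uniq au andbT in_cons negb_or eq_sym ay /=.
  have y_q : y != q by apply: contraNneq qi => <-.
  by apply: contraL yl => yt; rewrite (walk_inner_not_leaf adj_sym w yt).
have last_edge t : simple_walk adj a q t -> [set y; q] \in walk_edges a (rcons t y).
  by case/and3P => _ /eqP lq _; rewrite walk_edges_rcons mem_rcons lq setUC mem_head.
case/orP => [/eqP->|/on_pathP[t /andP[w ae]]].
  have [t w] := simple_walk_exists a q.
  by apply/on_pathP; exists (rcons t y); rewrite walk_to_y // last_edge.
apply/on_pathP; exists (rcons t y); rewrite walk_to_y //=.
by rewrite walk_edges_rcons mem_rcons in_cons ae orbT.
Qed.

Lemma cord_pathE x y e :
  cord_path adj [set x; y] e = on_path adj x y e || on_path adj y x e.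
Proof.
apply/existsP/orP => [[u /andP[uxy /existsP[v /andP[vxy /andP[uv uve]]]]]|].
  move: uxy vxy uv uve; rewrite !inE => /orP[]/eqP-> /orP[]/eqP->;
    rewrite ?eqxx //= => _; by [left | right].
case: (eqVneq x y) => [<-|xy]; first by rewrite on_path_refl => -[].
have yx : y != x by rewrite eq_sym.
case=> [xye|yxe]; [exists x | exists y]; rewrite !inE eqxx ?orbT /=; apply/existsP;
  [exists y | exists x]; by rewrite !inE eqxx ?orbT ?xy ?yx ?xye ?yxe.
Qed.

Lemma cord_path_pendant x y px py e : pendant x px -> pendant y py -> x != y ->
  cord_path adj [set x; y] e =
  [|| e == [set x; px], e == [set y; py] | cord_path adj [set px; py] e].
Proof.
move=> Px Py xy; have yx : y != x by rewrite eq_sym.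
rewrite !cord_pathE (on_path_head _ Px yx) (on_path_head _ Py xy).
rewrite (on_path_tail _ Py) 1?eq_sym ?(pendant_neq Py Px) //.
rewrite (on_path_tail _ Px) 1?eq_sym ?(pendant_neq Px Py) //.
by case: (e == _); case: (e == _); case: on_path; case: on_path.
Qed.

Lemma pendant_edge_eq x px y py : pendant x px -> pendant y py ->
  ([set x; px] == [set y; py]) = (x == y).
Proof.
move=> Px Py; rewrite set2_eq (negbTE (pendant_neq Px Py)) /= orbF.
case: (eqVneq x y) => [exy|] //=; subst y.
by case/and3P: Px => xl xpx _; case/and3P: Py => _ xpy _; rewrite (leaf_nb_unique xl xpx xpy) eqxx.
Qed.

Lemma pendant_edge_off z pz p q : pendant z pz ->
  p \notin leaves adj -> q \notin leaves adj -> cord_path adj [set p; q] [set z; pz] = false.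
Proof.
case/and3P=> zl _ _ pi qi.
have zp : z != p by apply: contraNneq pi => <-.
have zq : z != q by apply: contraNneq qi => <-.
by rewrite cord_pathE !(leaf_edge_off_path adj_sym).
Qed.

(* Two adjacent leaves form the whole tree, so no third leaf exists. *)
Lemma adjacent_leaves a b z :
  a \in leaves adj -> b \in leaves adj -> adj a b -> z != a -> z != b -> False.
Proof.
move=> al bl ab za zb.
have [[|h t] /and3P[wp /eqP zl wu]] := simple_walk_exists a z; first by rewrite -zl eqxx in za.
move: wp => /= /andP[ah wp]; rewrite (leaf_nb_unique al ah ab) in wp zl wu.
case: t wp zl wu => [_ zl|h' t /= /andP[bh' _] _]; first by rewrite -zl eqxx in zb.
by rewrite (leaf_nb_unique bl bh' (etrans (adj_sym _ _) ab)) !in_cons eqxx !orbT.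
Qed.

Lemma cherry_parent a b z : cherry adj a b -> z \in leaves adj -> z != a -> z != b ->
  exists p, pendant a p && pendant b p.
Proof.
case/and4P=> al bl ab /existsP[u /existsP[v /and3P[au bv /set0Pn[w wuv]]]] zl za zb.
move: wuv; rewrite !inE => /andP[/orP[]/eqP-> /orP[]/eqP E].
- by rewrite E eqxx in ab.
- by subst v; case: (adjacent_leaves bl al bv zb za).
- by subst u; case: (adjacent_leaves al bl au za zb).
subst v; exists u; rewrite /pendant al bl au bv /= andbb.
apply: contraNN ab => ul; apply/eqP.
exact: leaf_nb_unique ul (etrans (adj_sym _ _) au) (etrans (adj_sym _ _) bv).
Qed.

End Trees.

Local Open Scope ring_scope.

Lemma sum_indicator (R : pzSemiRingType) (T : finType) (A : pred T) (E : T) (F : T -> R) :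
  E \in A -> \sum_(e in A) (e == E)%:R * F e = F E.
Proof.
move=> EA; rewrite (bigD1 E) //= eqxx mul1r big1 ?addr0 // => e /andP[_ /negbTE->].
by rewrite mul0r.
Qed.

Section CordFunctionals.
Variables (R : realFieldType) (V : finType) (adj : rel V).
Hypothesis tree : is_tree adj.
Local Notation lam := (@lambda V adj R).

Lemma lambdaE c w : lam c w = \sum_(e in edges adj) (cord_path adj c e)%:R * w e.
Proof.
rewrite /lambda big_mkcondr; apply: eq_bigr => e _.
by case: cord_path; rewrite ?mul1r ?mul0r.
Qed.

Lemma pendant_edge_in x p : pendant adj x p -> [set x; p] \in edges adj.
Proof.
case/and3P=> _ xp _; rewrite inE; apply/existsP; exists x; apply/existsP; exists p.
by rewrite xp eqxx.
Qed.

Lemma lambda_pendant x y px py w : pendant adj x px -> pendant adj y py -> x != y ->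
  lam [set x; y] w = w [set x; px] + w [set y; py] + lam [set px; py] w.
Proof.
move=> Px Py xy; case/and3P: (Px) => _ _ pxi; case/and3P: (Py) => _ _ pyi.
have split e : (cord_path adj [set x; y] e)%:R =
    (e == [set x; px])%:R + (e == [set y; py])%:R + (cord_path adj [set px; py] e)%:R :> R.
  rewrite (cord_path_pendant tree _ Px Py xy).
  case: (eqVneq e [set x; px]) => [->|_].
    by rewrite (pendant_edge_eq Px Py) (negbTE xy) (pendant_edge_off tree Px) //= mulr0n !addr0.
  have [E|_] /= := eqVneq e [set y; py]; last by rewrite mulr0n !add0r.
  by rewrite E (pendant_edge_off tree Py) //= mulr0n addr0 add0r.
rewrite !lambdaE; under eq_bigr do rewrite split !mulrDl.
by rewrite !big_split /= !sum_indicator ?pendant_edge_in.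
Qed.

Definition edge_indicator (E : {set V}) : {set V} -> R := fun e => (e == E)%:R.

Lemma lambda_at_pendant x y px py z pz :
  pendant adj x px -> pendant adj y py -> x != y -> pendant adj z pz ->
  lam [set x; y] (edge_indicator [set z; pz]) = (z \in [set x; y])%:R.
Proof.
move=> Px Py xy Pz; rewrite (lambda_pendant _ Px Py xy) /edge_indicator (pendant_edge_eq Px Pz) (pendant_edge_eq Py Pz).
have -> : lam [set px; py] (edge_indicator [set z; pz]) = 0.
  case/and3P: Px => _ _ pxi; case/and3P: Py => _ _ pyi.
  rewrite lambdaE; under eq_bigr do rewrite mulrC.
  by rewrite sum_indicator ?pendant_edge_in // (pendant_edge_off tree).
rewrite addr0 !inE ![z == _]eq_sym.
case: (eqVneq x z) => [<-|_] /=; last by rewrite mulr0n add0r.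
by rewrite eq_sym (negbTE xy) mulr0n addr0.
Qed.

Definition pendant_cord (c : {set V}) : Prop :=
  exists x y px py, [/\ c = [set x; y], x != y, pendant adj x px & pendant adj y py].

Lemma pendant_cordI x y px py :
  pendant adj x px -> pendant adj y py -> x != y -> pendant_cord [set x; y].
Proof. by move=> Px Py xy; exists x, y, px, py. Qed.

Lemma pendant_cord_in c : pendant_cord c -> c \in cords adj.
Proof.
case=> [x [y [px [py [-> xy /and3P[xl _ _] /and3P[yl _ _]]]]]].
by rewrite inE subUset !sub1set xl yl cards2 xy.
Qed.

(* A linear relation among pendant cords, tested against the pendant edge of
   z, says that the coefficients of the cords ending at z sum to zero. *)
Lemma star_relation (L : {set {set V}}) (b : {set V} -> R) :
  {in L, forall c, pendant_cord c} ->
  (forall w, \sum_(c in L) b c * lam c w = 0) ->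
  forall z pz, pendant adj z pz -> \sum_(c in L) (z \in c)%:R * b c = 0.
Proof.
move=> Lp lin z pz Pz; rewrite -[RHS](lin (edge_indicator [set z; pz])).
apply: eq_bigr => c /Lp [x [y [px [py [-> xy Px Py]]]]].
by rewrite (lambda_at_pendant Px Py xy Pz) mulrC.
Qed.
End CordFunctionals.

Section Circuits.
Variables (R : realFieldType) (V : finType) (adj : rel V).
Local Notation lam := (@lambda V adj R).

(* A dependent set of cords is a circuit as soon as every linear relation on
   it that vanishes at one cord vanishes everywhere: a proper subset S supports
   only relations vanishing off S. *)
Lemma circuit_intro (L : {set {set V}}) :
  L \subset cords adj -> ~ indep adj R L ->
  (forall b : {set V} -> R, (forall w, \sum_(c in L) b c * lam c w = 0) ->
     (exists2 c0, c0 \in L & b c0 = 0) -> {in L, forall c, b c = 0}) ->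
  circuit adj R L.
Proof.
move=> Lc dep rigid; split => //; split => // S /properP[SL [c0 c0L c0S]].
split => [|a lin c cS]; first exact: subset_trans SL Lc.
pose b c := if c \in S then a c else 0.
have b0 : {in L, forall c, b c = 0}.
  apply: rigid; last by exists c0; rewrite // /b (negbTE c0S).
  move=> w; rewrite -[RHS](lin w) (big_setID S) /= (setIidPr SL) [X in _ + X]big1 ?addr0.
    by apply: eq_bigr => d dS; rewrite /b dS.
  by move=> d; rewrite inE => /andP[/negbTE dS _]; rewrite /b dS mul0r.
by have := b0 c (subsetP SL c cS); rewrite /b cS.
Qed.

Lemma F2_nonzero (x : 'F_2) : x != 0 -> x = 1.
Proof. by case: x => [[|[|n]] //] xlt _; apply: val_inj. Qed.

Section BinaryRepresentation.
Variables (m : nat) (phi : {set V} -> 'rV['F_2]_m).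
Hypothesis phi_rep : forall S : {set {set V}}, S \subset cords adj ->
  (indep adj R S <->
   forall a : {set V} -> 'F_2, \sum_(c in S) a c *: phi c = 0 -> forall c, c \in S -> a c = 0).

(* Over GF(2) the only nonzero coefficients are 1, and by minimality a
   relation on a circuit has full support: the vectors of a circuit sum to 0. *)
Lemma circuit_sum L : circuit adj R L -> \sum_(c in L) phi c = 0.
Proof.
case=> Lc [dep minimal].
have [a [lin [c0 [c0L ac0]]]] :
    exists a, \sum_(c in L) a c *: phi c = 0 /\ exists c0, c0 \in L /\ a c0 != 0.
  apply: NNPP => none; apply: dep; apply/(phi_rep Lc) => a lin c cL.
  by apply/eqP; apply: contraT => ac; case: none; exists a; split => //; exists c.
have a1 c : c \in L -> a c = 1.
  move=> cL; apply: F2_nonzero; apply: contraNneq (ac0) => ac.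
  pose S := [set d in L | a d != 0].
  have SL : S \subset L by apply/subsetP => d; rewrite inE => /andP[].
  have SpL : S \proper L by apply/properP; split => //; exists c; rewrite // inE ac eqxx andbF.
  apply/eqP; apply: (proj1 (phi_rep (subset_trans SL Lc)) (minimal S SpL) a); last by rewrite inE c0L ac0.
  rewrite -[RHS]lin [RHS](big_setID S) /= (setIidPr SL) [X in _ = _ + X]big1 ?addr0 //.
  by move=> d; rewrite !inE negb_and => /andP[/orP[/negP//|/negPn/eqP->] _]; rewrite scale0r.
by rewrite -[RHS]lin; apply: eq_bigr => c cL; rewrite a1 ?scale1r.
Qed.

Lemma symdiff_circuits_sum L1 L2 : circuit adj R L1 -> circuit adj R L2 ->
  \sum_(c in (L1 :\: L2) :|: (L2 :\: L1)) phi c = 0.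
Proof.
move=> C1 C2; have v2 (v : 'rV['F_2]_m) : v + v = 0.
  by rewrite -[v]scale1r -scalerDl (addrr_pchar2 (pchar_Fp (isT : prime 2))) scale0r.
have disj : [disjoint L1 :\: L2 & L2 :\: L1].
  by rewrite -setI_eq0; apply/eqP/setP => c; rewrite !inE; case: (c \in L1); case: (c \in L2).
rewrite (eq_bigl [predU L1 :\: L2 & L2 :\: L1]) => [|c]; last by rewrite !inE.
rewrite bigU //=.
transitivity (\sum_(c in L1) phi c + \sum_(c in L2) phi c); last by rewrite !circuit_sum ?addr0.
rewrite [\sum_(c in L1) _](big_setID L2) [\sum_(c in L2) _](big_setID L1) /= setIC.
by rewrite addrACA v2 add0r.
Qed.
End BinaryRepresentation.

Lemma not_binary_of_circuits L1 L2 : circuit adj R L1 -> circuit adj R L2 ->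
  indep adj R ((L1 :\: L2) :|: (L2 :\: L1)) -> (L1 :\: L2) :|: (L2 :\: L1) != set0 ->
  ~ binary_matroid adj R.
Proof.
move=> C1 C2 ID /set0Pn[c0 c0D] [m [phi phi_rep]].
suff : (1 : 'F_2) = 0 by move/eqP; rewrite oner_eq0.
apply: (proj1 (phi_rep _ (proj1 ID)) ID (fun=> 1) _ c0 c0D).
by rewrite -[RHS](symdiff_circuits_sum phi_rep C1 C2); apply: eq_bigr => c _; rewrite scale1r.
Qed.
End Circuits.

Section ExplicitSets.
Variables (T : finType) (P : T -> Prop) (c1 c2 c3 c4 c5 c6 : T).

Lemma forall_in_set6 : P c1 -> P c2 -> P c3 -> P c4 -> P c5 -> P c6 ->
  {in [set c1; c2; c3; c4; c5; c6], forall c, P c}.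
Proof. by move=> ? ? ? ? ? ? c; rewrite !inE => /orP[/orP[/orP[/orP[/orP[]|]|]|]|] /eqP->. Qed.

Lemma forall_in_set4 : P c1 -> P c2 -> P c3 -> P c4 -> {in [set c1; c2; c3; c4], forall c, P c}.
Proof. by move=> ? ? ? ? c; rewrite !inE => /orP[/orP[/orP[]|]|] /eqP->. Qed.

Lemma exists_in_set6 : (exists2 c, c \in [set c1; c2; c3; c4; c5; c6] & P c) ->
  P c1 \/ P c2 \/ P c3 \/ P c4 \/ P c5 \/ P c6.
Proof. by case=> c; rewrite !inE => /orP[/orP[/orP[/orP[/orP[]|]|]|]|] /eqP-> Pc; tauto. Qed.

Lemma exists_in_set4 : (exists2 c, c \in [set c1; c2; c3; c4] & P c) ->
  P c1 \/ P c2 \/ P c3 \/ P c4.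
Proof. by case=> c; rewrite !inE => /orP[/orP[/orP[]|]|] /eqP-> Pc; tauto. Qed.
End ExplicitSets.

Lemma sum_enumerated (T : finType) (M : nmodType) (A : {set T}) (s : seq T) (F : T -> M) :
  uniq s -> A =i s -> \sum_(c in A) F c = \sum_(c <- s) F c.
Proof. by move=> us As; rewrite big_uniq //; apply: eq_bigl => c; rewrite /= As. Qed.

(* Linear algebra of the test equations: around a cycle of even length
   b_i + b_(i+1) = 0 forces alternating signs, so one zero coefficient kills
   them all; around two triangles (odd cycles) all coefficients vanish. *)
Lemma hexagon_rigid (R : realFieldType) (b1 b2 b3 b4 b5 b6 : R) :
  b1 + b2 = 0 -> b2 + b3 = 0 -> b3 + b4 = 0 -> b4 + b5 = 0 -> b5 + b6 = 0 -> b6 + b1 = 0 ->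
  b1 = 0 \/ b2 = 0 \/ b3 = 0 \/ b4 = 0 \/ b5 = 0 \/ b6 = 0 ->
  b1 = 0 /\ b2 = 0 /\ b3 = 0 /\ b4 = 0 /\ b5 = 0 /\ b6 = 0.
Proof. by move=> *; do ![split|]; lra. Qed.

Lemma square_rigid (R : realFieldType) (b1 b2 b3 b4 : R) :
  b1 + b2 = 0 -> b2 + b3 = 0 -> b3 + b4 = 0 -> b4 + b1 = 0 ->
  b1 = 0 \/ b2 = 0 \/ b3 = 0 \/ b4 = 0 -> b1 = 0 /\ b2 = 0 /\ b3 = 0 /\ b4 = 0.
Proof. by move=> *; do ![split|]; lra. Qed.

Lemma triangle_zero (R : realFieldType) (b1 b2 b3 : R) :
  b1 + b2 = 0 -> b2 + b3 = 0 -> b3 + b1 = 0 -> b1 = 0 /\ b2 = 0 /\ b3 = 0.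
Proof. by move=> *; do ![split|]; lra. Qed.

(* Bookkeeping for explicit configurations of leaves: from the distinctness
   hypotheses in the context, decide (in)equalities of leaves and of cords. *)
Ltac split_neqs := repeat match goal with
  | H : is_true (_ && _) |- _ => case/andP: H => ? ?
  end.
Ltac add_sym_neqs := repeat match goal with
  | H : is_true (?a != ?b) |- _ => lazymatch goal with
      | _ : is_true (b != a) |- _ => fail
      | _ => have ? : b != a by rewrite eq_sym
      end
  end.
Ltac kill_neqs := repeat match goal with
  | H : is_true (?a != ?b) |- context [?a == ?b] => rewrite (negbTE H)
  end.
Ltac decide_eqs := rewrite ?set2_eq; kill_neqs; rewrite ?eqxx /=.

Section SixLeaves.
Variables (R : realFieldType) (V : finType) (adj : rel V).
Hypothesis tree : is_tree adj.
Variables (x1 x2 x3 x4 x5 x6 a b c : V).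
Hypothesis x_uniq : uniq [:: x1; x2; x3; x4; x5; x6].
Hypotheses (P1 : pendant adj x1 a) (P4 : pendant adj x4 a).
Hypotheses (P2 : pendant adj x2 b) (P5 : pendant adj x5 b).
Hypotheses (P3 : pendant adj x3 c) (P6 : pendant adj x6 c).

Local Notation lam := (@lambda V adj R).
Local Notation L1 := [set [set x1; x2]; [set x2; x3]; [set x3; x4];
                          [set x4; x5]; [set x5; x6]; [set x6; x1]].
Local Notation L2 := [set [set x1; x3]; [set x3; x4]; [set x4; x6]; [set x6; x1]].
Local Notation D := [set [set x1; x2]; [set x2; x3]; [set x3; x1];
                         [set x4; x5]; [set x5; x6]; [set x6; x4]].

Ltac neqs := move: x_uniq; rewrite /= !inE !negb_or => ?; split_neqs; add_sym_neqs.

(* The cords of L1, L2 and of the symmetric difference D are pairwise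
   distinct, so sums over these sets expand into their listed terms. *)
Lemma L1_sum (M : nmodType) (F : {set V} -> M) : \sum_(e in L1) F e =
  F [set x1; x2] + F [set x2; x3] + F [set x3; x4] +
  F [set x4; x5] + F [set x5; x6] + F [set x6; x1].
Proof.
neqs; rewrite (sum_enumerated _ (s := [:: [set x1; x2]; [set x2; x3]; [set x3; x4];
  [set x4; x5]; [set x5; x6]; [set x6; x1]])) => [|| e]; last by rewrite !inE -!orbA ?orbF.
  by rewrite !big_cons big_nil addr0 !addrA.
by rewrite /= !inE; decide_eqs.
Qed.

Lemma L2_sum (M : nmodType) (F : {set V} -> M) : \sum_(e in L2) F e =
  F [set x1; x3] + F [set x3; x4] + F [set x4; x6] + F [set x6; x1].
Proof.
neqs; rewrite (sum_enumerated _ (s := [:: [set x1; x3]; [set x3; x4];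
  [set x4; x6]; [set x6; x1]])) => [|| e]; last by rewrite !inE -!orbA ?orbF.
  by rewrite !big_cons big_nil addr0 !addrA.
by rewrite /= !inE; decide_eqs.
Qed.

Lemma D_sum (M : nmodType) (F : {set V} -> M) : \sum_(e in D) F e =
  F [set x1; x2] + F [set x2; x3] + F [set x3; x1] +
  F [set x4; x5] + F [set x5; x6] + F [set x6; x4].
Proof.
neqs; rewrite (sum_enumerated _ (s := [:: [set x1; x2]; [set x2; x3]; [set x3; x1];
  [set x4; x5]; [set x5; x6]; [set x6; x4]])) => [|| e]; last by rewrite !inE -!orbA ?orbF.
  by rewrite !big_cons big_nil addr0 !addrA.
by rewrite /= !inE; decide_eqs.
Qed.

Lemma L1_pendant : {in L1, forall e, pendant_cord adj e}.
Proof. by neqs; apply: forall_in_set6; apply: pendant_cordI; eassumption. Qed.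

Lemma L2_pendant : {in L2, forall e, pendant_cord adj e}.
Proof. by neqs; apply: forall_in_set4; apply: pendant_cordI; eassumption. Qed.

Lemma D_pendant : {in D, forall e, pendant_cord adj e}.
Proof. by neqs; apply: forall_in_set6; apply: pendant_cordI; eassumption. Qed.

Lemma cords_of_pendant (L : {set {set V}}) :
  {in L, forall e, pendant_cord adj e} -> L \subset cords adj.
Proof. by move=> Lp; apply/subsetP => e /Lp /pendant_cord_in. Qed.

(* The alternating sums around the hexagon and the square vanish identically:
   the pendant edges cancel in pairs and so do the paths between a, b, c. *)
Lemma L1_relation w : lam [set x1; x2] w - lam [set x2; x3] w + lam [set x3; x4] w
  - lam [set x4; x5] w + lam [set x5; x6] w - lam [set x6; x1] w = 0.
Proof.
neqs; rewrite (lambda_pendant tree w P1 P2) // (lambda_pendant tree w P2 P3) //.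
rewrite (lambda_pendant tree w P3 P4) // (lambda_pendant tree w P4 P5) //.
rewrite (lambda_pendant tree w P5 P6) // (lambda_pendant tree w P6 P1) //.
ring.
Qed.

Lemma L2_relation w : lam [set x1; x3] w - lam [set x3; x4] w
  + lam [set x4; x6] w - lam [set x6; x1] w = 0.
Proof.
neqs; rewrite (lambda_pendant tree w P1 P3) // (lambda_pendant tree w P3 P4) //.
rewrite (lambda_pendant tree w P4 P6) // (lambda_pendant tree w P6 P1) //.
rewrite [[set c; a]]setUC; ring.
Qed.

Lemma L1_dependent : ~ indep adj R L1.
Proof.
neqs; case=> _ ind.
pose beta e : R := if e \in [set [set x1; x2]; [set x3; x4]; [set x5; x6]] then 1 else -1.
suff : beta [set x1; x2] = 0 by rewrite /beta !inE eqxx => /eqP; rewrite oner_eq0.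
apply: ind; last by rewrite !inE eqxx.
move=> w; rewrite L1_sum /beta !inE; decide_eqs; have := L1_relation w; lra.
Qed.

Lemma L2_dependent : ~ indep adj R L2.
Proof.
neqs; case=> _ ind.
pose beta e : R := if e \in [set [set x1; x3]; [set x4; x6]] then 1 else -1.
suff : beta [set x1; x3] = 0 by rewrite /beta !inE eqxx => /eqP; rewrite oner_eq0.
apply: ind; last by rewrite !inE eqxx.
move=> w; rewrite L2_sum /beta !inE; decide_eqs; have := L2_relation w; lra.
Qed.

Ltac star_equations L_pendant L_sum lin :=
  let S := fresh "star" in
  have S := star_relation tree L_pendant lin;
  move: (S _ _ P1) (S _ _ P2) (S _ _ P3) (S _ _ P4) (S _ _ P5) (S _ _ P6); clear S;
  rewrite !L_sum !inE; decide_eqs; rewrite ?mulr1n ?mulr0n ?mul1r ?mul0r ?addr0 ?add0r.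

Lemma L1_rigid (beta : {set V} -> R) :
  (forall w, \sum_(e in L1) beta e * lam e w = 0) ->
  (exists2 e, e \in L1 & beta e = 0) -> {in L1, forall e, beta e = 0}.
Proof.
neqs => lin /exists_in_set6 zero; star_equations L1_pendant L1_sum lin.
move=> E1 E2 E3 E4 E5 E6; rewrite addrC in E1.
have [? [? [? [? [? ?]]]]] := hexagon_rigid E2 E3 E4 E5 E6 E1 zero.
exact: forall_in_set6.
Qed.

Lemma L2_rigid (beta : {set V} -> R) :
  (forall w, \sum_(e in L2) beta e * lam e w = 0) ->
  (exists2 e, e \in L2 & beta e = 0) -> {in L2, forall e, beta e = 0}.
Proof.
neqs => lin /exists_in_set4 zero; star_equations L2_pendant L2_sum lin.
move=> E1 _ E3 E4 _ E6; rewrite addrC in E1.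
have [? [? [? ?]]] := square_rigid E3 E4 E6 E1 zero.
exact: forall_in_set4.
Qed.

(* Two triangles of equations: the symmetric difference is independent. *)
Lemma D_indep : indep adj R D.
Proof.
split; first exact: cords_of_pendant D_pendant.
neqs => beta lin; star_equations D_pendant D_sum lin.
move=> E1 E2 E3 E4 E5 E6; rewrite addrC in E1; rewrite addrC in E4.
have [? [? ?]] := triangle_zero E2 E3 E1.
have [? [? ?]] := triangle_zero E5 E6 E4.
exact: forall_in_set6.
Qed.

Lemma L1_circuit : circuit adj R L1.
Proof. exact: circuit_intro (cords_of_pendant L1_pendant) L1_dependent L1_rigid. Qed.

Lemma L2_circuit : circuit adj R L2.
Proof. exact: circuit_intro (cords_of_pendant L2_pendant) L2_dependent L2_rigid. Qed.

Lemma L1_L2_symdiff : (L1 :\: L2) :|: (L2 :\: L1) = D.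
Proof.
neqs; rewrite [[set x3; x1]]setUC [[set x6; x4]]setUC; apply/setP => e; rewrite !inE.
have [->|] := eqVneq e [set x1; x2]; first by decide_eqs.
have [->|] := eqVneq e [set x2; x3]; first by decide_eqs.
have [->|] := eqVneq e [set x3; x4]; first by decide_eqs.
have [->|] := eqVneq e [set x4; x5]; first by decide_eqs.
have [->|] := eqVneq e [set x5; x6]; first by decide_eqs.
have [->|] := eqVneq e [set x6; x1]; first by decide_eqs.
have [->|] := eqVneq e [set x1; x3]; first by decide_eqs.
by case: (e == [set x4; x6]).
Qed.

Lemma six_leaves :
  [/\ circuit adj R L1, circuit adj R L2, (L1 :\: L2) :|: (L2 :\: L1) = D,
      indep adj R ((L1 :\: L2) :|: (L2 :\: L1)) & ~ binary_matroid adj R].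
Proof.
have not_binary : ~ binary_matroid adj R.
  apply: not_binary_of_circuits L1_circuit L2_circuit _ _; rewrite L1_L2_symdiff.
    exact: D_indep.
  by apply/set0Pn; exists [set x1; x2]; rewrite !inE eqxx.
by split; rewrite ?L1_L2_symdiff //; [exact: L1_circuit | exact: L2_circuit | exact: D_indep].
Qed.
End SixLeaves.
Local Close Scope ring_scope.

Lemma path_restrict (T : eqType) (e : rel T) (P : pred T) x p :
  path e x p -> all P (x :: p) -> path [rel u v | e u v && P u && P v] x p.
Proof.
elim: p x => [|y p IH] x //= /andP[xy yp] /and3P[Px Py Pp].
by rewrite xy Px Py /= IH //= Py.
Qed.

Lemma last_eq_nil (T : eqType) (u : T) q : uniq (u :: q) -> last u q = u -> q = [::].
Proof.
case/lastP: q => [//|q y]; rewrite last_rcons => uq yu; subst y.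
by move: uq; rewrite /= mem_rcons mem_head.
Qed.

Lemma path_all_targets (T : Type) (e : rel T) (Q : pred T) x p :
  (forall u v, e u v -> Q v) -> path e x p -> all Q p.
Proof.
by move=> eQ; elim: p x => [|y p IH] x //= /andP[/eQ -> /IH].
Qed.

Lemma connect_cross (T : finType) (e : rel T) (A : pred T) x y :
  connect e x y -> ~~ A x -> A y -> exists u w, [/\ ~~ A u, A w & e u w].
Proof.
case/connectP => p xp ->; elim: p x xp => [|z p IH] x /=.
  by move=> _ Nx Ax; rewrite Ax in Nx.
move=> /andP[xz zp] Nx Al; case: (boolP (A z)) => Az; first by exists x, z.
exact: IH zp Az Al.
Qed.

Lemma maximal_path (V : finType) (e : rel V) (F : pred V) y0 : ~~ F y0 ->
  exists q, [/\ path e y0 q, uniq (y0 :: q), all (predC F) (y0 :: q) &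
    forall x, e (last y0 q) x -> F x || (x \in y0 :: q)].
Proof.
move=> Fy0.
suff ext n q : #|V| - size q <= n -> path e y0 q -> uniq (y0 :: q) ->
    all (predC F) (y0 :: q) ->
    exists q', [/\ path e y0 q', uniq (y0 :: q'), all (predC F) (y0 :: q') &
    forall x, e (last y0 q') x -> F x || (x \in y0 :: q')].
  by apply: (ext #|V| [::]) => //=; rewrite ?subn0 // Fy0.
elim: n q => [|n IH] q qn qp qu qF.
  have := max_card (mem (y0 :: q)); move/card_uniqP: qu => -> /= qV; exfalso.
  by move: qn; rewrite leqn0 subn_eq0 leqNgt qV.
case: (pickP (fun x => e (last y0 q) x && ~~ F x && (x \notin y0 :: q))) =>
    [x /andP[/andP[lx Fx] xq]|none].
  apply: (IH (rcons q x)).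
  - by rewrite size_rcons; lia.
  - by rewrite rcons_path qp lx.
  - by rewrite -rcons_cons rcons_uniq xq qu.
  - by rewrite -rcons_cons all_rcons qF andbT.
exists q; split => // x lx; move: (none x); rewrite lx /=.
by case: (F x); case: (x \in y0 :: q).
Qed.

Section InnerTree.
Variables (V : finType) (adj : rel V).
Hypothesis tree : is_tree adj.
Let adj_sym : symmetric adj := proj1 tree.
Let adj_irr : irreflexive adj := proj1 (proj2 tree).

Definition inner : rel V :=
  [rel u v | adj u v && (u \notin leaves adj) && (v \notin leaves adj)].

Definition avoiding (z : V) : rel V := [rel u v | adj u v && (u != z) && (v != z)].

Definition inner_end (z : V) : Prop :=
  z \notin leaves adj /\ forall u v, inner z u -> inner z v -> u = v.

Lemma avoiding_sym z : symmetric (avoiding z).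
Proof. by move=> u v; rewrite /avoiding /= adj_sym andbAC. Qed.

(* Acyclicity: two distinct neighbours of z are disconnected once z is removed. *)
Lemma no_bypass z u v : adj z u -> adj z v -> u != v -> ~ connect (avoiding z) u v.
Proof.
case: tree => _ [_ [_ acyclic]] zu zv uv /connectP [p up vl].
move: vl; case: (shortenP up) => p' up' p'u _ vl {up}.
case: p' up' p'u vl => [|h p'] up' p'u vl; first by rewrite vl /= eqxx in uv.
have uz : u != z by case/andP: up' => /andP[/andP[_ ->]].
have p'z : all (fun x => x != z) (h :: p').
  by apply: path_all_targets up' => ? ? /andP[_ ->].
have := acyclic [:: z, u, h & p'] _ isT; rewrite /cycle rcons_cons /= zu rcons_path.
have -> : path adj h p'.
  by case/andP: up' => _; apply: sub_path => ? ? /andP[/andP[]].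
have uh : adj u h by case/andP: up' => /andP[/andP[]].
rewrite /= in vl; rewrite -vl (adj_sym v z) zv uh /= => acyc; suff : false by []; apply: acyc.
move: p'u => /= ->; rewrite andbT in_cons negb_or eq_sym uz /=.
by apply/negP => /(allP p'z); rewrite eqxx.
Qed.

(* The interior vertices of a tree induce a connected subgraph: the walk
   between two interior vertices has no leaf on it. *)
Lemma inner_connected u v :
  u \notin leaves adj -> v \notin leaves adj -> connect inner u v.
Proof.
move=> ui vi; have [t w] := simple_walk_exists tree u v.
case/and3P: (w) => wp /eqP vl _.
have ti : all (fun x => x \notin leaves adj) (u :: t).
  apply/allP => x; rewrite in_cons => /orP[/eqP->//|xt].
  by case: (eqVneq x v) => [->//|xv]; exact: (walk_inner_not_leaf adj_sym w xt xv).
by apply/connectP; exists t; first exact: (path_restrict wp ti).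
Qed.

Lemma inner_nb_exists z v :
  z \notin leaves adj -> v \notin leaves adj -> z != v -> exists u, inner z u.
Proof.
move=> zi vi zv; case/connectP: (inner_connected zi vi) => [[|u p]] /=.
  by move=> _ E; rewrite E eqxx in zv.
by case/andP => zu _ _; exists u.
Qed.

Lemma inner_path_avoiding x0 q z :
  path inner x0 q -> z \notin x0 :: q -> {subset x0 :: q <= connect (avoiding z) x0}.
Proof.
move=> xq zq.
have qz : all (fun v => v != z) (x0 :: q) by apply/allP => v vq; apply: contraNneq zq => <-.
apply: path_connect; apply: sub_path (path_restrict xq qz) => u v /=.
by rewrite /avoiding /= => /andP[/andP[/andP[/andP[-> _] _] ->] ->].
Qed.

Lemma inner_path_avoiding_last x0 q :
  path inner x0 q -> uniq (x0 :: q) -> forall x, x \in x0 :: q -> x != last x0 q ->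
  connect (avoiding (last x0 q)) x0 x.
Proof.
case/lastP: q => [|q y]; first by move=> _ _ x; rewrite inE => /eqP-> /=; rewrite eqxx.
rewrite rcons_path last_rcons -rcons_cons rcons_uniq => /andP[xq _] /andP[yq _] x.
rewrite mem_rcons in_cons => /orP[/eqP->|xq']; first by rewrite eqxx.
by move=> _; exact: (inner_path_avoiding xq yq xq').
Qed.

Lemma single_inner_nb z r (S : pred V) :
  (forall x, inner z x -> S x) -> (forall x, S x -> connect (avoiding z) r x) ->
  forall u v, inner z u -> inner z v -> u = v.
Proof.
move=> nbS Sr u v zu zv; apply/eqP; apply: contraT => uv.
have ur := Sr u (nbS u zu); rewrite (sym_connect_sym (avoiding_sym z)) in ur.
have adj_zu : adj z u by case/andP: zu => /andP[].
have adj_zv : adj z v by case/andP: zv => /andP[].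
by case: (no_bypass adj_zu adj_zv uv (connect_trans ur (Sr v (nbS v zv)))).
Qed.

Lemma last_inner x0 q :
  path inner x0 q -> x0 \notin leaves adj -> last x0 q \notin leaves adj.
Proof. by elim: q x0 => [|y q IH] x0 //= /andP[/andP[/andP[_ _] yi] yq] _; exact: IH. Qed.

Lemma maximal_path_end x0 q :
  x0 \notin leaves adj -> path inner x0 q -> uniq (x0 :: q) ->
  (forall x, inner (last x0 q) x -> x \in x0 :: q) -> inner_end (last x0 q).
Proof.
move=> x0i xq xu nbq; split; first exact: last_inner.
apply: (@single_inner_nb _ x0 (fun x => (x \in x0 :: q) && (x != last x0 q))) => x.
  move=> zx; rewrite nbq //=; apply: contraTneq zx => ->.
  by rewrite /inner /= adj_irr.
by case/andP => xq' xl; exact: inner_path_avoiding_last.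
Qed.

(* An interior vertex off an interior path P (starting at an interior vertex)
   yields an inner end off P: leave P along an interior edge w--u and extend
   maximally away from P; all interior neighbours of the end z3 are then on P
   or on the extension, hence connected to each other avoiding z3. *)
Lemma inner_end_off_path z1 q v :
  z1 \notin leaves adj -> path inner z1 q -> v \notin leaves adj -> v \notin z1 :: q ->
  exists2 z3, inner_end z3 & z3 \notin z1 :: q.
Proof.
move=> z1i z1q vi vq.
have [u [w [uq wq uw]]] :=
  connect_cross (A := [pred x | x \in z1 :: q]) (inner_connected vi z1i) vq (mem_head z1 q).
have ui : u \notin leaves adj by case/andP: uw => /andP[].
have [q3 [uq3 u3 /allP q3P max3]] := maximal_path inner uq.
set z3 := last u q3 in max3 *.
have z3q : z3 \notin z1 :: q by exact: q3P _ (mem_last u q3).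
exists z3 => //; split; first exact: last_inner.
apply: (@single_inner_nb _ z1 (fun x => (x \in z1 :: q) || (x \in u :: q3) && (x != z3))).
  move=> x z3x; have xz3 : x != z3 by apply: contraTneq z3x => ->; rewrite /inner /= adj_irr.
  by case/orP: (max3 x z3x) => /= xin; rewrite xin ?xz3 ?orbT.
move=> x /orP[xq|/andP[xq3 xz3]]; first exact: (inner_path_avoiding z1q z3q).
have uz3 : u != z3.
  apply: contraNneq xz3 => uz3; have q3nil : q3 = [::] by apply: (last_eq_nil u3); rewrite -/z3 -uz3.
  by move: xq3; rewrite q3nil mem_seq1 uz3.
have wz3 : w != z3 by apply: contraNneq z3q => <-.
have wu : avoiding z3 w u.
  by case/andP: uw => /andP[uw _] _; rewrite /avoiding /= adj_sym uw uz3 wz3.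
apply: connect_trans (inner_path_avoiding z1q z3q wq) _.
exact: connect_trans (connect1 wu) (inner_path_avoiding_last uq3 u3 xq3 xz3).
Qed.

(* Take a maximal interior path from an inner end z1 to an inner
   end z2; if it misses an interior vertex, a third inner end lies off it. *)
Lemma inner_path_or_three_ends (x0 : V) :
  (exists (x : V) (p : seq V), path adj x p /\ uniq (x :: p) /\
     (forall v, v \notin leaves adj -> v \in x :: p)) \/
  exists z1 z2 z3, [/\ uniq [:: z1; z2; z3], inner_end z1, inner_end z2 & inner_end z3].
Proof.
case: (pickP (fun v => v \notin leaves adj)) => [y0 y0i|none]; last first.
  by left; exists x0, [::]; do 2!split => //; move=> v; rewrite none.
have [q1 [y0q1 u1 _ max1]] := @maximal_path _ inner pred0 y0 isT.
have [z1i end1] := maximal_path_end y0i y0q1 u1 max1.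
set z1 := last y0 q1 in z1i end1.
have [q2 [z1q2 u2 _ max2]] := @maximal_path _ inner pred0 z1 isT.
have end2 := maximal_path_end z1i z1q2 u2 max2; set z2 := last z1 q2 in max2 end2.
case: (boolP [forall v, (v \notin leaves adj) ==> (v \in z1 :: q2)]) => [/forallP cover|].
  left; exists z1, q2; split; first by apply: sub_path z1q2 => u v /andP[/andP[]].
  by split=> // v vi; move: (cover v); rewrite vi.
case/forallPn => v; rewrite negb_imply => /andP[vi vq].
have [z3 end3 z3q] := inner_end_off_path z1i z1q2 vi vq.
right; exists z1, z2, z3; split => //.
have z12 : z1 != z2.
  apply/eqP => z12; have q2nil : q2 = [::] by apply: (last_eq_nil u2); rewrite -/z2 -z12.
  have z1v : z1 != v by apply: contraNneq vq => <-; exact: mem_head.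
  have [u z1u] := inner_nb_exists z1i vi z1v.
  move: (max2 u); rewrite -/z2 -z12 z1u q2nil mem_seq1 => /(_ isT) /eqP uz1.
  by move: z1u; rewrite uz1 /inner /= adj_irr.
rewrite /= !inE negb_or z12 /=.
rewrite andbT; apply/andP; split; apply: contraNneq z3q => <-; [exact: mem_head | exact: mem_last].
Qed.

Lemma inner_end_leaves z : deg adj z = 3 -> inner_end z ->
  exists l1 l2, [/\ l1 != l2, pendant adj l1 z & pendant adj l2 z].
Proof.
move=> deg3 [zi one].
have nbs := cardsID [set u | u \in leaves adj] [set u | adj z u].
have few : #|[set u | adj z u] :\: [set u | u \in leaves adj]| <= 1.
  rewrite leqNgt; apply/negP => /card_gt1P [u [v [uN vN uv]]].
  move: uN vN; rewrite !inE => /andP[ui zu] /andP[vi zv].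
  by move: uv; rewrite (one u v) ?eqxx // /inner /= ?zu ?zv zi inE.
have : 1 < #|[set u | adj z u] :&: [set u | u \in leaves adj]|.
  by move: nbs; rewrite -/(deg adj z) deg3; lia.
case/card_gt1P => l1 [l2 [l1z l2z l12]]; move: l1z l2z; rewrite !inE.
move=> /andP[zl1 l1l] /andP[zl2 l2l].
by exists l1, l2; rewrite /pendant zi !(adj_sym _ z) zl1 zl2 !andbT !inE l1l l2l.
Qed.
End InnerTree.

Lemma pendant_parent_neq (V : finType) (adj : rel V) x p y q :
  pendant adj x p -> pendant adj y q -> p != q -> x != y.
Proof.
case/and3P=> xl xp _ /and3P[_ yq _]; apply: contraNneq => xy.
by move: yq; rewrite -xy => /(leaf_nb_unique xl xp) ->.
Qed.

Lemma caterpillar_of_binary_matroid (R : realFieldType) (V : finType) (adj : rel V) :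
  is_binary_Xtree adj -> binary_matroid adj R -> is_caterpillar adj.
Proof.
move=> bin binM; split => //; case: bin => [[tree [_ leaves3]] deg3].
have [x0 _] : exists x0, x0 \in leaves adj by apply/card_gt0P; apply: leq_trans leaves3.
case: (inner_path_or_three_ends tree x0) => [//|[z1 [z2 [z3 [zu e1 e2 e3]]]]].
have [l1 [k1 [lk1 L1 K1]]] := inner_end_leaves tree (deg3 _ e1.1) e1.
have [l2 [k2 [lk2 L2 K2]]] := inner_end_leaves tree (deg3 _ e2.1) e2.
have [l3 [k3 [lk3 L3 K3]]] := inner_end_leaves tree (deg3 _ e3.1) e3.
have lk_uniq : uniq [:: l1; l2; l3; k1; k2; k3].
  move: zu; rewrite /= !inE !negb_or => ?; split_neqs; add_sym_neqs.
  rewrite !andbT; do !(apply/andP; split) => //; apply: pendant_parent_neq; eassumption.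
by case: (six_leaves R tree lk_uniq L1 K1 L2 K2 L3 K3).
Qed.

(* Three cherries on six distinct leaves hang from three interior vertices
   (a third leaf of the tree rules out a two-leaf tree). *)
Lemma cherries_parents (V : finType) (adj : rel V) (x1 x2 x3 x4 x5 x6 : V) :
  is_tree adj -> uniq [:: x1; x2; x3; x4; x5; x6] ->
  all (fun x => x \in leaves adj) [:: x1; x2; x3; x4; x5; x6] ->
  cherry adj x1 x4 -> cherry adj x2 x5 -> cherry adj x3 x6 ->
  exists a b c, [/\ pendant adj x1 a && pendant adj x4 a,
    pendant adj x2 b && pendant adj x5 b & pendant adj x3 c && pendant adj x6 c].
Proof.
move=> tree xu /and4P[X1 X2 X3 _] c14 c25 c36.
move: xu; rewrite /= !inE !negb_or => ?; split_neqs; add_sym_neqs.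
have [a ?] : exists a, pendant adj x1 a && pendant adj x4 a by move: (cherry_parent tree c14 X2); apply.
have [b ?] : exists b, pendant adj x2 b && pendant adj x5 b by move: (cherry_parent tree c25 X3); apply.
have [c ?] : exists c, pendant adj x3 c && pendant adj x6 c by move: (cherry_parent tree c36 X1); apply.
by exists a, b, c.
Qed.

Theorem mainTheorem12 (R : realFieldType) (V : finType) (adj : rel V) :
  is_Xtree adj ->
  (forall x1 x2 x3 x4 x5 x6 : V,
     uniq [:: x1; x2; x3; x4; x5; x6] ->
     all (fun x => x \in leaves adj) [:: x1; x2; x3; x4; x5; x6] ->
     cherry adj x1 x4 -> cherry adj x2 x5 -> cherry adj x3 x6 ->
     let L1 := [set [set x1; x2]; [set x2; x3]; [set x3; x4];
                    [set x4; x5]; [set x5; x6]; [set x6; x1]] in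
     let L2 := [set [set x1; x3]; [set x3; x4]; [set x4; x6]; [set x6; x1]] in
     [/\ circuit adj R L1, circuit adj R L2,
         (L1 :\: L2) :|: (L2 :\: L1) =
           [set [set x1; x2]; [set x2; x3]; [set x3; x1];
                [set x4; x5]; [set x5; x6]; [set x6; x4]],
         indep adj R ((L1 :\: L2) :|: (L2 :\: L1)) &
         ~ binary_matroid adj R]) /\
  (is_binary_Xtree adj -> binary_matroid adj R -> is_caterpillar adj).
Proof.
case=> tree _; split; last exact: caterpillar_of_binary_matroid.
move=> x1 x2 x3 x4 x5 x6 xu xl c14 c25 c36.
have [a [b [c [/andP[P1 P4] /andP[P2 P5] /andP[P3 P6]]]]] :=
  cherries_parents tree xu xl c14 c25 c36.
exact (six_leaves R tree xu P1 P4 P2 P5 P3 P6).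
Qed.
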